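(* Let $D$ be a lower bounded distributive lattice. Then $M(D_\infty)\cong M(D)\oplus\mathbb{Z}$, where the splitting is induced by the natural homomorphisms $D\to D_\infty\to\mathbf{2}$ and $\mathbf{2}\to D_\infty$.
   Context: For a lower bounded distributive lattice $D$, $D_\infty$ is the bounded distributive lattice obtained by adjoining a new top element $\infty$. $\mathbf{2}=\{0\le 1\}$; the map $D_\infty\to\mathbf{2}$ sends every element other than $\infty$ to $0$ and $\infty$ to $1$, and $\mathbf{2}\to D_\infty$ sends $0\mapsto 0$, $1\mapsto\infty$. The module of motives $M(D)$ is $\mathbb{Z}[D]$ modulo $[0]=0$ and $[U]+[V]=[U\vee V]+[U\wedge V]$, functorial in lattice homomorphisms preserving $0$. *)

From HB Require Import structures.
From mathcomp Require Import all_boot all_order all_algebra.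
From mathcomp.multinomials Require Export freeg.
Set Implicit Arguments. Unset Strict Implicit. Unset Printing Implicit Defensive.
Import Order.TTheory GRing.Theory.
Local Open Scope ring_scope.

Notation FZ T := {freeg T / int}.

(* Generators of the subgroup of relations defining the module of motives of a
   lattice presented by its bottom [z], join [j] and meet [m]:
   [0] = 0 and [U] + [V] = [U \/ V] + [U /\ V]. *)
Inductive motrel (T : choiceType) (z : T) (j m : T -> T -> T) : FZ T -> Prop :=
| motrel0 : motrel z j m 0
| motrel_bot : motrel z j m << z >>
| motrel_mod (U V : T) :
    motrel z j m (<< U >> + << V >> - << j U V >> - << m U V >>)
| motrel_add x y : motrel z j m x -> motrel z j m y -> motrel z j m (x + y)
| motrel_opp x : motrel z j m x -> motrel z j m (- x).

(* M(T) = Z[T] / motrel; we work with representatives: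
   x = y in M(T)  iff  motrel (x - y). *)

Definition fgmapT (T T' : choiceType) (g : T -> T') (x : FZ T) : FZ T' :=
  fglift (fun t => << g t >> : FZ T') x.

Definition motD d (D : bDistrLatticeType d) : FZ D -> Prop :=
  motrel (\bot%O : D) (fun u v => (u `|` v)%O) (fun u v => (u `&` v)%O).

(* D_oo = option D, with None the new top element oo. *)
Definition join_oo d (D : bDistrLatticeType d) (u v : option D) : option D :=
  match u, v with
  | Some a, Some b => Some (a `|` b)%O
  | _, _ => None
  end.
Definition meet_oo d (D : bDistrLatticeType d) (u v : option D) : option D :=
  match u, v with
  | Some a, Some b => Some (a `&` b)%O
  | None, w => w
  | w, None => w
  end.
Definition motDoo d (D : bDistrLatticeType d) : FZ (option D) -> Prop :=
  motrel (Some (\bot%O : D)) (@join_oo d D) (@meet_oo d D).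

(* The lattice 2 = {0 <= 1} = bool (false <= true). *)
Definition mot2 : FZ bool -> Prop := motrel false orb andb.

Definition to2 (D : Type) (u : option D) : bool :=
  if u is None then true else false.
Definition from2 d (D : bDistrLatticeType d) (b : bool) : option D :=
  if b then None else Some \bot%O.

From HB Require Import structures.
From mathcomp Require Import all_boot all_order all_algebra.
From mathcomp.multinomials Require Import freeg.
Set Implicit Arguments. Unset Strict Implicit. Unset Printing Implicit Defensive.
Import Order.TTheory GRing.Theory.
Local Open Scope ring_scope.

(* As an abelian group Z[D_oo] = Z[D] (+) Z[oo].  The projection onto Z[D]
   that kills [oo] respects the relations, since every relation of D_oo
   involving oo is trivial (oo \/ U = oo and oo /\ U = U); it therefore
   descends to a retraction M(D_oo) -> M(D) of i, with kernel spanned by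
   [oo] = s [1].  Finally M(2) = Z, read off as the coefficient of 1, since
   its only relation is [0] = 0. *)

Lemma freegZ (T : choiceType) (k : int) (t : T) : k *: << t >> = << k *g t >> :> FZ T.
Proof. by apply/eqP/freeg_eqP => u; rewrite coeffZ !coeffU mul1r. Qed.

Section FreegMap.
Variables T T' : choiceType.

HB.instance Definition _ (f : T -> FZ T') :=
  GRing.isZmodMorphism.Build (FZ T) (FZ T') (fglift f) (lift_is_additive f).

Lemma fgmapT_is_additive (g : T -> T') : zmod_morphism (fgmapT g).
Proof. exact: lift_is_additive. Qed.

HB.instance Definition _ (g : T -> T') :=
  GRing.isZmodMorphism.Build (FZ T) (FZ T') (fgmapT g) (fgmapT_is_additive g).

Lemma fgmapTU (g : T -> T') k t : fgmapT g << k *g t >> = << k *g g t >>.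
Proof. by rewrite /fgmapT liftU freegZ. Qed.

Lemma eq_fgmapT (g g' : T -> T') : g =1 g' -> fgmapT g =1 fgmapT g'.
Proof.
move=> eq_g x; elim/freeg_ind_dom0: x => [|k t x _ _ IHx]; first by rewrite !raddf0.
by rewrite !raddfD /= !fgmapTU eq_g IHx.
Qed.

Lemma fgmapT_cst (t0 : T') (x : FZ T) : fgmapT (fun=> t0) x = << deg x *g t0 >>.
Proof.
elim/freeg_ind_dom0: x => [|k t x _ _ IHx]; first by rewrite raddf0 deg0 freegU0.
by rewrite !raddfD /= fgmapTU IHx degU freegUD.
Qed.

End FreegMap.

Lemma fgmapT_id (T : choiceType) : fgmapT (@id T) =1 id.
Proof.
move=> x; elim/freeg_ind_dom0: x => [|k t x _ _ IHx]; first by rewrite raddf0.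
by rewrite raddfD /= fgmapTU IHx.
Qed.

Lemma fgmapT_comp (T1 T2 T3 : choiceType) (g : T1 -> T2) (h : T2 -> T3) x :
  fgmapT h (fgmapT g x) = fgmapT (h \o g) x.
Proof.
elim/freeg_ind_dom0: x => [|k t x _ _ IHx]; first by rewrite !raddf0.
by rewrite !raddfD /= !fgmapTU IHx.
Qed.

Section Relations.
Variables (T : choiceType) (z : T) (j m : T -> T -> T).
Local Notation R := (motrel z j m).

Lemma motrelB x y : R x -> R y -> R (x - y).
Proof. by move=> Rx Ry; apply/motrel_add/motrel_opp. Qed.

Lemma motrelDr x y : R y -> R (x + y) -> R x.
Proof. by move=> Ry Rxy; rewrite -(addrK y x); apply: motrelB. Qed.

Lemma motrelDl x y : R x -> R (x + y) -> R y.
Proof. by rewrite addrC; apply: motrelDr. Qed.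

Lemma motrelMn x n : R x -> R (x *+ n).
Proof.
move=> Rx; elim: n => [|n IHn]; first exact: motrel0.
by rewrite mulrS; apply: motrel_add.
Qed.

Lemma motrelMz x (k : int) : R x -> R (x *~ k).
Proof. by case: k => n Rx; [|apply: motrel_opp]; apply: motrelMn. Qed.

Lemma motrelU_bot (k : int) : R << k *g z >>.
Proof. by rewrite -[k]intz -freegU_mulz; apply/motrelMz/motrel_bot. Qed.

Variables (T' : choiceType) (z' : T') (j' m' : T' -> T' -> T').
Local Notation R' := (motrel z' j' m').

Lemma fglift_motrel (f : T -> FZ T') :
  R' (f z) -> (forall U V, R' (f U + f V - f (j U V) - f (m U V))) ->
  forall x, R x -> R' (fglift f x).
Proof.
move=> Rz Rmod x; elim => [|||x1 x2 _ IH1 _ IH2|x1 _ IH1].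
- by rewrite raddf0; apply: motrel0.
- by rewrite liftU scale1r.
- by move=> U V; rewrite !raddfB raddfD /= !liftU !scale1r.
- by rewrite raddfD; apply: motrel_add.
- by rewrite raddfN; apply: motrel_opp.
Qed.

Lemma fgmapT_motrel (g : T -> T') : g z = z' ->
  (forall U V, g (j U V) = j' (g U) (g V)) ->
  (forall U V, g (m U V) = m' (g U) (g V)) ->
  forall x, R x -> R' (fgmapT g x).
Proof.
move=> gz gj gm; apply: fglift_motrel; first by rewrite gz; apply: motrel_bot.
by move=> U V; rewrite gj gm; apply: motrel_mod.
Qed.

End Relations.

Lemma freeg_boolE (x : FZ bool) :
  x = << coeff false x *g false >> + << coeff true x *g true >>.
Proof.
by apply/eqP/freeg_eqP => -[]; rewrite coeffD !coeffU /= ?mulr0 ?mulr1 ?addr0 ?add0r.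
Qed.

Lemma mot2_coeff_true (x : FZ bool) : mot2 x <-> coeff true x = 0.
Proof.
split; last by move=> x1; rewrite (freeg_boolE x) x1 freegU0 addr0; apply: motrelU_bot.
elim => [|||x1 x2 _ IH1 _ IH2|x1 _ IH1].
- by rewrite coeff0.
- by rewrite coeffU mulr0.
- by move=> [] []; rewrite !coeffB !coeffD !coeffU /= ?mulr0 ?mulr1 ?subr0 ?subrr.
- by rewrite coeffD IH1 IH2 addr0.
- by rewrite coeffN IH1 oppr0.
Qed.

Section OptionSplitting.
Variables (d : Order.disp_t) (D : bDistrLatticeType d).

Lemma Some_motrel x : motD x -> motDoo (fgmapT (@Some D) x).
Proof. exact: fgmapT_motrel. Qed.

Lemma to2_motrel x : motDoo x -> mot2 (fgmapT (@to2 D) x).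
Proof. by apply: fgmapT_motrel => // -[u|] [v|]. Qed.

Lemma from2_motrel x : mot2 x -> motDoo (fgmapT (@from2 d D) x).
Proof. by apply: fgmapT_motrel => // -[] [] //=; rewrite ?joinxx ?meetxx. Qed.

Lemma to2_Some_deg x :
  fgmapT (@to2 D) (fgmapT Some x) = << deg x *g false >>.
Proof. by rewrite fgmapT_comp -fgmapT_cst. Qed.

Lemma from2K : cancel (fgmapT (@from2 d D)) (fgmapT (@to2 D)).
Proof. by move=> x; rewrite fgmapT_comp (@eq_fgmapT _ _ _ id) ?fgmapT_id // => -[]. Qed.

Definition some_part : FZ (option D) -> FZ D :=
  fglift (fun u => if u is Some t then << t >> else 0).

Lemma some_partK : cancel (fgmapT (@Some D)) some_part.
Proof.
rewrite /some_part => x; elim/freeg_ind_dom0: x => [|k t x _ _ IHx].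
  by rewrite !raddf0.
by rewrite !raddfD /= IHx fgmapTU liftU freegZ.
Qed.

Lemma freeg_optionE (x : FZ (option D)) :
  x = fgmapT Some (some_part x) + << coeff None x *g None >>.
Proof.
rewrite /some_part; elim/freeg_ind_dom0: x => [|k [t|] x _ _ IHx].
- by rewrite !raddf0 freegU0 addr0.
- by rewrite !raddfD /= coeffU mulr0 add0r liftU freegZ fgmapTU {1}IHx addrA.
- rewrite !raddfD /= coeffU mulr1 liftU scaler0 raddf0 add0r -freegUD.
  by rewrite {1}IHx addrCA.
Qed.

Lemma some_part_motrel x : motDoo x -> motD (some_part x).
Proof.
apply: fglift_motrel; first exact: motrel_bot.
move=> [u|] [v|] /=; first exact: motrel_mod.
all: by rewrite ?addr0 ?add0r ?subr0 ?subrr ?oppr0; apply: motrel0.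
Qed.

End OptionSplitting.

Theorem lemma3p36 (d : Order.disp_t) (D : bDistrLatticeType d) :
  let i := @fgmapT D (option D) Some in
  let p := @fgmapT (option D) bool (@to2 D) in
  let s := @fgmapT bool (option D) (@from2 d D) in
  (* the induced maps are well defined on modules of motives *)
  (forall x, motD x -> motDoo (i x)) /\
  (forall x, motDoo x -> mot2 (p x)) /\
  (forall x, mot2 x -> motDoo (s x)) /\
  (* M(2) is isomorphic to Z *)
  (exists theta : {additive FZ bool -> int},
      (forall x, theta x = 0 <-> mot2 x) /\ (forall n : int, exists x, theta x = n)) /\
  (* p o i = 0 and p o s = id on motives *)
  (forall x, mot2 (p (i x))) /\
  (forall x, mot2 (p (s x) - x)) /\
  (* M(D) (+) M(2) -> M(D_oo), (a, b) |-> i a + s b, is surjective ... *)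
  (forall x : FZ (option D), exists a b, motDoo (x - (i a + s b))) /\
  (* ... and injective *)
  (forall a b, motDoo (i a + s b) -> motD a /\ mot2 b).
Proof.
move=> i p s.
have p_i x : mot2 (p (i x)) by rewrite [p _]to2_Some_deg; apply: motrelU_bot.
have p_s x : mot2 (p (s x) - x) by rewrite [p _]from2K subrr; apply: motrel0.
split; first exact: Some_motrel.
split; first exact: to2_motrel.
split; first exact: from2_motrel.
split.
  exists (coeff true); split=> [x|n]; first exact: iff_sym (mot2_coeff_true x).
  by exists << n *g true >>; rewrite /= coeffU mulr1.
split=> //; split=> //; split.
  move=> x; exists (some_part x), << coeff None x *g true >>.
  by rewrite [s _]fgmapTU -freeg_optionE subrr; apply: motrel0.
move=> a b Rab.
have Rb : mot2 b.
  have Rpsb : mot2 (p (s b)).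
    by apply: motrelDl (p_i a) _; rewrite -raddfD; apply: to2_motrel.
  by apply: motrelDr (p_s b) _; rewrite addrC subrK.
split=> //; rewrite -[a]some_partK; apply: some_part_motrel.
have Rsb : motDoo (s b) by exact: from2_motrel.
exact: motrelDr Rsb Rab.
Qed.
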